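(* For every condition $\varphi$ (over a signature of facts $\Sigma$ and a $\Sigma$-algebra of facts $\mathcal{D}$), the rewriting system $\mathcal{R}^{\mathrm{cond}}_{\Sigma,\mathcal{D}}(\varphi)$ is terminating, i.e. there is no infinite sequence of one-step rewrites $t_0\to t_1\to t_2\to\cdots$ in it.
   Context: Setting. Fix an order-sorted signature $\Sigma$ containing sorts $\mathsf{Fact}$ (facts) and $\mathsf{Bool}$, and a $\Sigma$-algebra of facts $\mathcal{D}$ presented by structural axioms $A$ (associativity/commutativity/identity) together with confluent and terminating equations; $\mathcal{D}$ provides the Boolean connectives and a Boolean-valued equality $=$ on every sort, and every ground term of sort $\mathsf{Bool}$ reduces to $\mathsf{true}$ or $\mathsf{false}$. Term equality below is modulo $A$ and these equations. Finite multisets of facts are built with an associative and commutative operator $\circ$ with identity $\emptyset$. Patterns. A terminating and preserving pattern $P$ is a term $[F_1]_!\circ[F_2]_?$ or $[F_2]_?$, where $F_1,F_2$ are non-empty (in general non-ground) multisets of facts; $P_!$ and $P_?$ denote the multisets of facts wrapped by $[\cdot]_!$ and $[\cdot]_?$ respectively ($P_!=\emptyset$ if absent). Conditions are the terms $\mathrm{False}$; $\{B\}$ for a term $B$ of sort $\mathsf{Bool}$; $\neg\psi$; $\psi_1\vee\psi_2$; $\exists P.\psi$ with $P$ a terminating and preserving pattern. In $\exists P.\psi$ the quantifier binds in $\psi$ all variables of $P$ not already bound by the surrounding context. A subcondition of $\varphi$ is a subterm of $\varphi$ which is a condition. The rewriting system $\mathcal{R}^{\mathrm{cond}}_{\Sigma,\mathcal{D}}(\varphi)$.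 States are terms $\{F,S\}^c$, where $F$ is a ground finite multiset of facts and $S$ is a finite sequence (stack, top at the right) of frames, and terminal terms $\mathrm{Sat}(B)$, $B$ Boolean. Frames: $\mathrm{Res}(B)$; $\mathrm{Not}$; and, for a subcondition $\psi$ of $\varphi$, a list $\vec v$ of distinct variables of $\varphi$ containing the free variables of $\psi$, and a list $\vec a$ of ground values of the same sorts: evaluation frames $[\vec a]^{\vec v}_\psi$, marked frames $[\vec a]^{\vec v,\downarrow}_\psi$, and, when $\psi=\exists P.\psi'$, iterator frames $[F'\mid\vec a]^{\vec v}_{\psi}$ with $F'$ a multiset of facts. Write $\sigma=\{\vec a/\vec v\}$. The rules ($S$ an arbitrary stack) are: (1) $\{F,S[\vec a]^{\vec v}_{\mathrm{False}}\}^c\to\{F,S\,\mathrm{Res}(\mathsf{false})\}^c$; (2) $\{F,S[\vec a]^{\vec v}_{\{B\}}\}^c\to\{F,S\,\mathrm{Res}(\sigma(B))\}^c$; (3) $\{F,S[\vec a]^{\vec v}_{\neg\psi}\}^c\to\{F,S\,\mathrm{Not}\,[\vec a]^{\vec v}_{\psi}\}^c$; (4) $\{F,S\,\mathrm{Not}\,\mathrm{Res}(B)\}^c\to\{F,S\,\mathrm{Res}(\neg B)\}^c$; (5) $\{F,S[\vec a]^{\vec v}_{\psi_1\vee\psi_2}\}^c\to\{F,S[\vec a]^{\vec v,\downarrow}_{\psi_1}[\vec a]^{\vec v}_{\psi_2}\}^c$; (6) $\{F,S[\vec a]^{\vec v,\downarrow}_{\psi}\mathrm{Res}(\mathsf{true})\}^c\to\{F,S\,\mathrm{Res}(\mathsf{true})\}^c$;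 (7) $\{F,S[\vec a]^{\vec v,\downarrow}_{\psi}\mathrm{Res}(\mathsf{false})\}^c\to\{F,S[\vec a]^{\vec v}_{\psi}\}^c$; (8) $\{F,S[\vec a]^{\vec v}_{\exists P.\psi}\}^c\to\{F,S[F\mid\vec a]^{\vec v}_{\exists P.\psi}\}^c$; (9) if $\vec w$ lists the variables of $P$ not in $\vec v$, $\vec b$ are ground values, $\sigma'=\{\vec a/\vec v,\vec b/\vec w\}$ and $F'=F''\circ\sigma'(P_!\circ P_?)$, then $\{F,S[F'\mid\vec a]^{\vec v}_{\exists P.\psi}\}^c\to\{F,S[F''\circ\sigma'(P_!)\mid\vec a]^{\vec v}_{\exists P.\psi}[\vec a,\vec b]^{\vec v,\vec w}_{\psi}\}^c$; (10) $\{F,S[F'\mid\vec a]^{\vec v}_{\exists P.\psi}\mathrm{Res}(\mathsf{false})\}^c\to\{F,S[F'\mid\vec a]^{\vec v}_{\exists P.\psi}\}^c$; (11) $\{F,S[F'\mid\vec a]^{\vec v}_{\exists P.\psi}\mathrm{Res}(\mathsf{true})\}^c\to\{F,S\,\mathrm{Res}(\mathsf{true})\}^c$; (12) if there are no $F'',\vec b$ with $F'=F''\circ\{\vec a/\vec v,\vec b/\vec w\}(P_!\circ P_?)$, then $\{F,S[F'\mid\vec a]^{\vec v}_{\exists P.\psi}\}^c\to\{F,S\,\mathrm{Res}(\mathsf{false})\}^c$; (13) $\{F,\mathrm{Res}(B)\}^c\to\mathrm{Sat}(B)$. *)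

From mathcomp Require Import all_boot.
From mathcomp Require Import finmap multiset.

Set Implicit Arguments.
Unset Strict Implicit.
Unset Printing Implicit Defensive.

(* Abstract presentation of the Sigma-algebra of facts D.                    *)
(*   V      : variables (with decidable equality)                           *)
(*   Val    : ground values (ground terms modulo A and the equations)       *)
(*   GF     : ground facts (modulo A and the equations)                     *)
(*   OF     : (possibly non-ground) fact terms                              *)
(*   BT     : (possibly non-ground) terms of sort Bool                      *)
(*   substF s f : the ground fact s(f) (s a substitution, given as a        *)
(*                partial map V -> option Val)                              *)
(*   evalB s B  : the normal form (true/false) of the ground Boolean s(B)   *)
(*   wt x a     : the ground value a has (a subsort of) the sort of x       *)
(* Finite multisets of ground facts are finmap's {mset GF}: `+` (msetD) is  *)
(* associative-commutative with identity mset0, so Leibniz equality of      *)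
(* multisets is equality modulo A.                                          *)

Section CondRewriting.

Local Open Scope mset_scope.

Variables (V : eqType) (Val : Type) (GF : choiceType) (OF BT : Type).
Variables (fvF : OF -> seq V) (fvB : BT -> seq V).
Variable substF : (V -> option Val) -> OF -> GF.
Variable evalB : (V -> option Val) -> BT -> bool.
Variable wt : V -> Val -> bool.

(* A pattern [F1]_! o [F2]_?  (pat_bang = F1, empty when [.]_! is absent;   *)
(* pat_quest = F2).  Terminating and preserving: F2 non-empty.              *)
Record pattern := Pattern { pat_bang : seq OF ; pat_quest : seq OF }.

Definition tp_pattern (P : pattern) : bool := size (pat_quest P) != 0.

Inductive cond :=
| CFalse
| CBool of BT
| CNot of cond
| COr of cond & cond
| CEx of pattern & cond.

Fixpoint wf_cond (c : cond) : bool :=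
  match c with
  | CFalse | CBool _ => true
  | CNot c1 => wf_cond c1
  | COr c1 c2 => wf_cond c1 && wf_cond c2
  | CEx P c1 => tp_pattern P && wf_cond c1
  end.

Definition varsP (P : pattern) : seq V :=
  undup (flatten (map fvF (pat_bang P ++ pat_quest P))).

Fixpoint varsC (c : cond) : seq V :=
  match c with
  | CFalse => [::]
  | CBool B => fvB B
  | CNot c1 => varsC c1
  | COr c1 c2 => varsC c1 ++ varsC c2
  | CEx P c1 => varsP P ++ varsC c1
  end.

(* free variables: exists P. psi binds the variables of P (those of them    *)
(* already bound by the context are matched against their values).         *)
Fixpoint fvC (c : cond) : seq V :=
  match c with
  | CFalse => [::]
  | CBool B => fvB B
  | CNot c1 => fvC c1
  | COr c1 c2 => fvC c1 ++ fvC c2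
  | CEx P c1 => [seq x <- fvC c1 | x \notin varsP P]
  end.

Inductive subcond : cond -> cond -> Prop :=
| sub_refl c : subcond c c
| sub_not c c1 : subcond c c1 -> subcond c (CNot c1)
| sub_orl c c1 c2 : subcond c c1 -> subcond c (COr c1 c2)
| sub_orr c c1 c2 : subcond c c2 -> subcond c (COr c1 c2)
| sub_ex c P c1 : subcond c c1 -> subcond c (CEx P c1).

Definition subst_of (v : seq V) (a : seq Val) : V -> option Val :=
  fun x => if x \in v then nth None (map Some a) (index x v) else None.

Definition new_vars (v : seq V) (P : pattern) : seq V :=
  [seq x <- varsP P | x \notin v].

Definition inst (s : V -> option Val) (Fs : seq OF) : {mset GF} :=
  seq_mset (map (substF s) Fs).

(* Stack frames:  Res(B), Not, [a]^v_psi, [a]^{v,down}_psi and the         *)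
(* iterator [F'|a]^v_{exists P.psi}  (stored as FIter F' a v P psi).        *)
Inductive frame :=
| FRes of bool
| FNot
| FEval of seq Val & seq V & cond
| FMark of seq Val & seq V & cond
| FIter of {mset GF} & seq Val & seq V & pattern & cond.

(* States {F,S}^c (top of the stack at the right) and Sat(B). *)
Inductive state :=
| St of {mset GF} & seq frame
| Sat of bool.

Definition matches (F' : {mset GF}) (a : seq Val) (v : seq V) (P : pattern)
    (F'' : {mset GF}) (b : seq Val) : Prop :=
  all2 wt (new_vars v P) b /\
  F' = msetD F'' (inst (subst_of (v ++ new_vars v P) (a ++ b))
                       (pat_bang P ++ pat_quest P)).

Inductive step : state -> state -> Prop :=
| r1 F Sk a v :
    step (St F (Sk ++ [:: FEval a v CFalse])) (St F (Sk ++ [:: FRes false]))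
| r2 F Sk a v B :
    step (St F (Sk ++ [:: FEval a v (CBool B)]))
         (St F (Sk ++ [:: FRes (evalB (subst_of v a) B)]))
| r3 F Sk a v c :
    step (St F (Sk ++ [:: FEval a v (CNot c)]))
         (St F (Sk ++ [:: FNot; FEval a v c]))
| r4 F Sk b :
    step (St F (Sk ++ [:: FNot; FRes b])) (St F (Sk ++ [:: FRes (~~ b)]))
| r5 F Sk a v c1 c2 :
    step (St F (Sk ++ [:: FEval a v (COr c1 c2)]))
         (St F (Sk ++ [:: FMark a v c1; FEval a v c2]))
| r6 F Sk a v c :
    step (St F (Sk ++ [:: FMark a v c; FRes true])) (St F (Sk ++ [:: FRes true]))
| r7 F Sk a v c :
    step (St F (Sk ++ [:: FMark a v c; FRes false]))
         (St F (Sk ++ [:: FEval a v c]))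
| r8 F Sk a v P c :
    step (St F (Sk ++ [:: FEval a v (CEx P c)]))
         (St F (Sk ++ [:: FIter F a v P c]))
| r9 F Sk F' F'' a v P c b :
    matches F' a v P F'' b ->
    step (St F (Sk ++ [:: FIter F' a v P c]))
         (St F (Sk ++ [:: FIter (msetD F'' (inst (subst_of (v ++ new_vars v P) (a ++ b))
                                                (pat_bang P))) a v P c;
                         FEval (a ++ b) (v ++ new_vars v P) c]))
| r10 F Sk F' a v P c :
    step (St F (Sk ++ [:: FIter F' a v P c; FRes false]))
         (St F (Sk ++ [:: FIter F' a v P c]))
| r11 F Sk F' a v P c :
    step (St F (Sk ++ [:: FIter F' a v P c; FRes true]))
         (St F (Sk ++ [:: FRes true]))
| r12 F Sk F' a v P c :
    ~ (exists F'' b, matches F' a v P F'' b) ->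
    step (St F (Sk ++ [:: FIter F' a v P c])) (St F (Sk ++ [:: FRes false]))
| r13 F b :
    step (St F [:: FRes b]) (Sat b).

Definition frame_ok (phi : cond) (a : seq Val) (v : seq V) (c : cond) : Prop :=
  subcond c phi /\ uniq v /\ {subset v <= varsC phi} /\
  {subset fvC c <= v} /\ all2 wt v a.

Definition valid_frame (phi : cond) (fr : frame) : Prop :=
  match fr with
  | FRes _ | FNot => True
  | FEval a v c | FMark a v c => frame_ok phi a v c
  | FIter _ a v P c => frame_ok phi a v (CEx P c)
  end.

Definition valid_state (phi : cond) (s : state) : Prop :=
  match s with
  | St _ Sk => forall i, i < size Sk -> valid_frame phi (nth FNot Sk i)
  | Sat _ => True
  end.

Definition terminating_cond (phi : cond) : Prop :=
  ~ exists t : nat -> state,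
      forall n, valid_state phi (t n) /\ step (t n) (t n.+1).

End CondRewriting.

From mathcomp Require Import all_boot.
From mathcomp Require Import finmap multiset.
From mathcomp Require Import zify.

(* Every rule strictly decreases a natural-number weight of the state, so no
   infinite rewrite sequence exists.  The fact base F of a state {F,S} is never
   modified, so N = |F| is fixed along a sequence.  Res and Not frames weigh 1,
   an evaluation or marked frame for psi weighs w(psi), where
     w(False) = w({B}) = 2,  w(not psi) = w(psi) + 3,
     w(psi1 \/ psi2) = w(psi1) + w(psi2) + 1,
     w(exists P. psi) = (N + 1)(w(psi) + 2) + 1,
   and an iterator [F'|a]_(exists P. psi) weighs (|F'| + 1)(w(psi) + 2).
   Rule (9) spawns a frame of weight w(psi) but removes the instance of the
   non-empty P_? from F', so the iterator loses at least w(psi) + 2. *)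

Set Implicit Arguments.
Unset Strict Implicit.
Unset Printing Implicit Defensive.

Lemma size_msetD (K : choiceType) (A B : multiset K) :
  size (msetD A B) = size A + size B.
Proof.
rewrite -size_cat; apply: perm_size.
by apply/allP => x _ /=; rewrite count_cat !count_mem_mset msetE2.
Qed.

Lemma no_infinite_descent (T : Type) (f : T -> nat) (t : nat -> T) :
  ~ (forall n, f (t n.+1) < f (t n)).
Proof.
move=> desc.
have bound n : f (t n) + n <= f (t 0).
  by elim: n => [|n IHn]; [rewrite addn0 | have := desc n; lia].
by have := bound (f (t 0)).+1; lia.
Qed.

Section Termination.

Variables (V : eqType) (Val : Type) (GF : choiceType) (OF BT : Type).
Variables (fvF : OF -> seq V) (fvB : BT -> seq V).
Variable substF : (V -> option Val) -> OF -> GF.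
Variable evalB : (V -> option Val) -> BT -> bool.
Variable wt : V -> Val -> bool.

Fixpoint cond_weight (N : nat) (c : cond OF BT) : nat :=
  match c with
  | CFalse | CBool _ => 2
  | CNot c1 => cond_weight N c1 + 3
  | COr c1 c2 => cond_weight N c1 + cond_weight N c2 + 1
  | CEx _ c1 => (N + 1) * (cond_weight N c1 + 2) + 1
  end.

Definition frame_weight (N : nat) (fr : frame V Val GF OF BT) : nat :=
  match fr with
  | FRes _ | FNot => 1
  | FEval _ _ c | FMark _ _ c => cond_weight N c
  | FIter F' _ _ _ c => (size F' + 1) * (cond_weight N c + 2)
  end.

Definition state_weight (s : state V Val GF OF BT) : nat :=
  match s with
  | St F Sk => sumn (map (frame_weight (size F)) Sk)
  | Sat _ => 0
  end.

Lemma cond_weight_ge2 N c : 2 <= cond_weight N c.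
Proof. by elim: c => /= *; lia. Qed.

Lemma state_weight_cat F Sk Sk' :
  state_weight (St F (Sk ++ Sk')) = state_weight (St F Sk) + state_weight (St F Sk').
Proof. by rewrite /= map_cat sumn_cat. Qed.

Lemma size_inst s (Fs : seq OF) : size (inst substF s Fs) = size Fs.
Proof. by rewrite (perm_size (perm_eq_seq_mset _)) size_map. Qed.

Lemma wf_subcond (c phi : cond OF BT) : subcond c phi -> wf_cond phi -> wf_cond c.
Proof. by elim=> //= > _ IH => [/andP[/IH] | /andP[_ /IH] | /andP[_ /IH]]. Qed.

Lemma valid_state_top phi F Sk (fr : frame V Val GF OF BT) :
  valid_state fvF fvB wt phi (St F (Sk ++ [:: fr])) -> valid_frame fvF fvB wt phi fr.
Proof.
by move=> /(_ (size Sk)); rewrite size_cat nth_cat ltnn subnn addn1; apply.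
Qed.

Lemma match_frame_weight N F' F'' a b v P c :
  tp_pattern P -> matches fvF substF wt F' a v P F'' b ->
  let s := subst_of (v ++ new_vars fvF v P) (a ++ b) in
  frame_weight N (FIter (msetD F'' (inst substF s (pat_bang P))) a v P c)
    + frame_weight N (FEval GF (a ++ b) (v ++ new_vars fvF v P) c)
  < frame_weight N (FIter F' a v P c).
Proof.
rewrite /tp_pattern -lt0n => quest_gt0 [_ ->] /=.
rewrite !size_msetD !size_inst size_cat.
by have := cond_weight_ge2 N c; nia.
Qed.

Lemma step_state_weight phi s s' :
  wf_cond phi -> valid_state fvF fvB wt phi s ->
  step fvF substF evalB wt s s' -> state_weight s' < state_weight s.
Proof.
move=> wf_phi + step_s; case: step_s => [> | > | > | > | > | > | > | >
  | F Sk F' F'' a v P c b M | > | > | > | F b //] valid_s;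
  rewrite !state_weight_cat ltn_add2l /= ?addn0;
  (* all rules but (9) are arithmetic, given that condition weights are >= 2 *)
  try by do ?[match goal with |- context[cond_weight ?N ?c] =>
                have := cond_weight_ge2 N c; move: (cond_weight N c) => ? ?
              end]; nia.
have [sub_phi _] := valid_state_top valid_s.
have /andP[tpP _] := wf_subcond sub_phi wf_phi.
exact: (match_frame_weight (size F) c tpP M).
Qed.

End Termination.

Theorem theorem1
    (V : eqType) (Val : Type) (GF : choiceType) (OF BT : Type)
    (fvF : OF -> seq V) (fvB : BT -> seq V)
    (substF : (V -> option Val) -> OF -> GF)
    (evalB : (V -> option Val) -> BT -> bool)
    (wt : V -> Val -> bool)
    (phi : cond OF BT) :
  wf_cond phi ->
  terminating_cond fvF fvB substF evalB wt phi.
Proof.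
move=> wf_phi [t chain].
apply: (@no_infinite_descent _ (@state_weight V Val GF OF BT) t) => n.
have [valid_tn step_tn] := chain n.
exact: step_state_weight wf_phi valid_tn step_tn.
Qed.
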